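(* Let $G$ and $H$ be finite simple graphs, neither complete, not both equal to a disjoint union of two complete graphs, and suppose ${\rm diam}(G\diamond H)=3$. Then for vertices $(g,h),(g',h')$ of $G\diamond H$, $(g,h)(g',h')\in E((G\diamond H)_{SR})$ if and only if the (unordered) pair satisfies at least one of the following, where in (iv) and (v) either vertex may play the role of $(g,h)$: (i) $(g,h)\neq(g',h')$ and $N_{G\diamond H}[(g,h)]=N_{G\diamond H}[(g',h')]$; (ii) $d_{G\diamond H}((g,h),(g',h'))=2$ and neither $(g,h)$ nor $(g',h')$ is a boundary vertex of $G\diamond H$; (iii) $d_{G\diamond H}((g,h),(g',h'))=3$; (iv) $g$ and $g'$ are universal vertices of $G$, $d_H(h,h')=2$ and $hh'\in E(H_{SR})$; or $h$ and $h'$ are universal vertices of $H$, $d_G(g,g')=2$ and $gg'\in E(G_{SR})$; (v) $g$ is universal in $G$, $g'$ is not universal in $G$, $d_H(h,h')=2$, $d_H(h,h'')\le 2$ for every $h''\in N_H[h']$, and $h'$ belongs to no $\gamma_H$-pair; or $h$ is universal in $H$, $h'$ is not universal in $H$, $d_G(g,g')=2$, $d_G(g,g'')\le 2$ for every $g''\in N_G[g']$, and $g'$ belongs to no $\gamma_G$-pair.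
   Context: The modular product $G\diamond H$ has vertex set $V(G)\times V(H)$; distinct vertices $(g,h)$ and $(g',h')$ are adjacent iff ($g=g'$ and $hh'\in E(H)$), or ($gg'\in E(G)$ and $h=h'$), or ($gg'\in E(G)$ and $hh'\in E(H)$), or ($g\neq g'$, $h\neq h'$, $gg'\notin E(G)$ and $hh'\notin E(H)$). A vertex $v$ is universal in $X$ if $N_X[v]=V(X)$. A boundary vertex of a connected graph $X$ is a vertex $u$ for which some $v$ has $d_X(u,v)={\rm diam}(X)$. A $\gamma_G$-pair is a set $\{g,g'\}$ of two distinct vertices of $G$ such that $N_G[g]\cap N_G[g']=\emptyset$ and $N_G[g]\cup N_G[g']=V(G)$. Two distinct vertices $u,v$ of a graph $X$ lying in the same connected component are mutually maximally distant if there is no $x\in N_X(u)$ with $d_X(x,v)=d_X(u,v)+1$ and no $y\in N_X(v)$ with $d_X(y,u)=d_X(u,v)+1$; the strong resolving graph $X_{SR}$ has as edges exactly the mutually maximally distant pairs. *)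

(* A finite simple graph is a symmetric irreflexive
   relation e : rel T on a finType T. *)
From mathcomp Require Import all_boot.
Set Implicit Arguments. Unset Strict Implicit. Unset Printing Implicit Defensive.

Section Graphs.
Variable T : finType.
Implicit Types (e : rel T) (x y u v : T).

Fixpoint ball e (k : nat) x : {set T} :=
  match k with
  | 0 => [set x]
  | k'.+1 => ball e k' x :|: [set y | [exists z in ball e k' x, e z y]]
  end.

Definition dist_le e x y k : bool := y \in ball e k x.

Definition dist_eq e x y k : bool :=
  (y \in ball e k x) && (if k is k'.+1 then y \notin ball e k' x else true).

Definition diam_eq e k : Prop :=
  (forall x y, dist_le e x y k) /\ (exists x y, dist_eq e x y k).

Definition boundary e u : Prop :=
  exists k, diam_eq e k /\ exists v, dist_eq e u v k.

Definition cnbhd e v : {set T} := [set w | (w == v) || e v w].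

Definition universal e v : Prop := cnbhd e v = [set: T].

Definition complete e : Prop := forall x y, x != y -> e x y.

Definition two_cliques e : Prop :=
  exists A : {set T}, A != set0 /\ ~: A != set0 /\
    forall x y, x != y -> e x y = ((x \in A) == (y \in A)).

Definition gamma_pair e g g' : Prop :=
  g != g' /\ cnbhd e g :&: cnbhd e g' = set0 /\
  cnbhd e g :|: cnbhd e g' = [set: T].

(* mutually maximally distant = edge of the strong resolving graph *)
Definition SR_edge e u v : Prop :=
  u != v /\ exists k, dist_eq e u v k /\
    (forall x, e u x -> ~~ dist_eq e x v k.+1) /\
    (forall y, e v y -> ~~ dist_eq e y u k.+1).

End Graphs.

Definition modprod (T1 T2 : finType) (eG : rel T1) (eH : rel T2) : rel (T1 * T2) :=
  fun a b =>
    (a != b) &&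
    [|| (a.1 == b.1) && eH a.2 b.2,
        eG a.1 b.1 && (a.2 == b.2),
        eG a.1 b.1 && eH a.2 b.2
      | [&& a.1 != b.1, a.2 != b.2, ~~ eG a.1 b.1 & ~~ eH a.2 b.2]].

Definition cond_iv (T1 T2 : finType) (eG : rel T1) (eH : rel T2)
  (a b : T1 * T2) : Prop :=
  (universal eG a.1 /\ universal eG b.1 /\ dist_eq eH a.2 b.2 2 /\ SR_edge eH a.2 b.2)
  \/
  (universal eH a.2 /\ universal eH b.2 /\ dist_eq eG a.1 b.1 2 /\ SR_edge eG a.1 b.1).

Definition cond_v (T1 T2 : finType) (eG : rel T1) (eH : rel T2)
  (a b : T1 * T2) : Prop :=
  (universal eG a.1 /\ ~ universal eG b.1 /\ dist_eq eH a.2 b.2 2 /\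
   (forall h'', h'' \in cnbhd eH b.2 -> dist_le eH a.2 h'' 2) /\
   ~ (exists h0, gamma_pair eH b.2 h0))
  \/
  (universal eH a.2 /\ ~ universal eH b.2 /\ dist_eq eG a.1 b.1 2 /\
   (forall g'', g'' \in cnbhd eG b.1 -> dist_le eG a.1 g'' 2) /\
   ~ (exists g0, gamma_pair eG b.1 g0)).

From mathcomp Require Import all_boot.
Set Implicit Arguments. Unset Strict Implicit. Unset Printing Implicit Defensive.

(* In the modular product of G and H, (x1, x2) is a closed neighbour of (g, h) iff
   "x1 in N_G[g]" and "x2 in N_H[h]" have the same truth value.  When the diameter is 3, the strong
   resolving edges are the adjacent true twins, the pairs at distance 3, and the pairs
   at distance 2 all of whose closed neighbours stay within distance 2 of the partner;
   between non-boundary vertices the last condition is automatic.  If (g, h) is a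
   boundary vertex of such a distance-2 pair, a vertex (z1, z2) at distance 3 from it
   has z1 in N_G[g] or z2 in N_H[h], and the description of neighbourhoods then forces
   g to be universal in G, resp. h universal in H; whether g' (resp. h') is universal
   too decides between (iv) and (v).  Conversely, (iv) and (v) imply the distance-2
   condition. *)

Section ClosedNeighbourhoods.
Variables (T : finType) (e : rel T).
Hypotheses (e_sym : symmetric e) (e_irr : irreflexive e).
Implicit Types x y z u v w : T.

Definition cnbhd_meet x y : bool := cnbhd e x :&: cnbhd e y != set0.

Definition cnbhd_cover x y : Prop := cnbhd e x :|: cnbhd e y = [set: T].

(* The neighbourhood form of "d(x,y) = 2 and x, y are mutually maximally
   distant", valid in graphs of diameter at most 3. *)
Definition mmd2 x y : Prop :=
  [/\ y \notin cnbhd e x, {in cnbhd e x, forall u, cnbhd_meet u y}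
    & {in cnbhd e y, forall v, cnbhd_meet v x}].

Lemma in_cnbhd x y : (y \in cnbhd e x) = (y == x) || e x y.
Proof. by rewrite inE. Qed.

Lemma cnbhd_refl x : x \in cnbhd e x.
Proof. by rewrite in_cnbhd eqxx. Qed.

Lemma in_cnbhdC x y : (y \in cnbhd e x) = (x \in cnbhd e y).
Proof. by rewrite !in_cnbhd eq_sym e_sym. Qed.

Lemma edge_cnbhd x y : e x y = (y != x) && (y \in cnbhd e x).
Proof. by rewrite in_cnbhd; case: eqVneq => [->|]; rewrite ?e_irr. Qed.

Lemma twins_edge x y : cnbhd e x = cnbhd e y -> e x y = (x != y).
Proof. by move=> Nxy; rewrite edge_cnbhd Nxy cnbhd_refl andbT eq_sym. Qed.

Lemma universal_cnbhd x y : universal e x -> y \in cnbhd e x.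
Proof. by move->; rewrite inE. Qed.

Lemma universalP x : reflect (universal e x) (cnbhd e x == [set: T]).
Proof. exact: eqP. Qed.

Lemma not_universal x : ~ universal e x -> exists t, t \notin cnbhd e x.
Proof.
move=> nux; have /subsetPn[t _ tx] : ~~ ([set: T] \subset cnbhd e x).
  by rewrite subTset; apply/universalP.
by exists t.
Qed.

Lemma cnbhd_cover_mem x y :
  cnbhd_cover x y -> forall w, (w \in cnbhd e x) || (w \in cnbhd e y).
Proof. by move=> cov w; rewrite -in_setU cov in_setT. Qed.

Lemma cnbhd_meetP x y :
  reflect (exists2 w, w \in cnbhd e x & w \in cnbhd e y) (cnbhd_meet x y).
Proof.
rewrite /cnbhd_meet; apply: (iffP (set0Pn _)) => [[w /setIP[]]|[w wx wy]].
  by exists w.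
by exists w; apply/setIP.
Qed.

Lemma cnbhd_meetC x y : cnbhd_meet x y = cnbhd_meet y x.
Proof. by rewrite /cnbhd_meet setIC. Qed.

Lemma cnbhd_meetI w x y : w \in cnbhd e x -> w \in cnbhd e y -> cnbhd_meet x y.
Proof. by move=> wx wy; apply/cnbhd_meetP; exists w. Qed.

Lemma cnbhd_meet_refl x : cnbhd_meet x x.
Proof. exact: cnbhd_meetI (cnbhd_refl x) (cnbhd_refl x). Qed.

Lemma ball0 x y : (y \in ball e 0 x) = (y == x).
Proof. by rewrite inE. Qed.

Lemma ballS k x y :
  (y \in ball e k.+1 x) = [exists z in ball e k x, y \in cnbhd e z].
Proof.
rewrite /= in_setU in_set; apply/orP/existsP.
- case=> [yk|/existsP[z /andP[zk ezy]]]; first by exists y; rewrite yk cnbhd_refl.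
  by exists z; rewrite zk in_cnbhd ezy orbT.
- move=> [z /andP[zk]]; rewrite in_cnbhd => /orP[/eqP->|ezy]; [by left | right].
  by apply/existsP; exists z; rewrite zk.
Qed.

Lemma ball1 x y : (y \in ball e 1 x) = (y \in cnbhd e x).
Proof.
rewrite ballS; apply/existsP/idP => [[z /andP[]]|yx]; first by rewrite inE => /eqP->.
by exists x; rewrite inE eqxx.
Qed.

Lemma ball2 x y : (y \in ball e 2 x) = cnbhd_meet x y.
Proof.
rewrite ballS; apply/existsP/cnbhd_meetP => -[z].
- by rewrite ball1 => /andP[zx yz]; exists z; rewrite // in_cnbhdC.
- by move=> zx zy; exists z; rewrite ball1 zx in_cnbhdC.
Qed.

Lemma mem_ball_le k k' x y : k <= k' -> y \in ball e k x -> y \in ball e k' x.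
Proof.
elim: k' => [|k' IH]; first by rewrite leqn0 => /eqP->.
by rewrite leq_eqVlt => /orP[/eqP->//|lt] yk; rewrite /= inE (IH lt yk).
Qed.

Lemma dist_eqS k x y :
  dist_eq e x y k.+1 = (y \in ball e k.+1 x) && (y \notin ball e k x).
Proof. by []. Qed.

Lemma dist_eq_uniq x y k k' : dist_eq e x y k -> dist_eq e x y k' -> k = k'.
Proof.
wlog lt : k k' / k < k'.
  by move=> W dk dk'; case: (ltngtP k k') => // lt; [apply: W | symmetry; apply: W].
case: k' lt => // k' lt /andP[yk _] /andP[_ /negP[]].
by apply: mem_ball_le yk; rewrite -ltnS.
Qed.

Lemma dist_eq0 x y : dist_eq e x y 0 = (y == x).
Proof. by rewrite /dist_eq ball0 andbT. Qed.

Lemma dist_eq1 x y : dist_eq e x y 1 = e x y.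
Proof. by rewrite dist_eqS ball1 ball0 edge_cnbhd andbC. Qed.

Lemma dist_eq2 x y : dist_eq e x y 2 = cnbhd_meet x y && (y \notin cnbhd e x).
Proof. by rewrite dist_eqS ball2 ball1. Qed.

Lemma dist_eq3_next x y u :
  cnbhd_meet x y -> e x u -> dist_eq e u y 3 = ~~ cnbhd_meet u y.
Proof.
case/cnbhd_meetP=> w wx wy xu; rewrite dist_eqS ball2.
suff -> : y \in ball e 3 u by [].
rewrite ballS; apply/existsP; exists w; rewrite ball2 -in_cnbhdC wy andbT.
apply: (cnbhd_meetI (w := x)); rewrite in_cnbhdC //.
by rewrite in_cnbhd xu orbT.
Qed.

Lemma SR_edge_dist2 x y : dist_eq e x y 2 ->
  SR_edge e x y <->
  (forall u, e x u -> cnbhd_meet u y) /\ (forall v, e y v -> cnbhd_meet v x).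
Proof.
move=> d2; have /andP[mxy yx] := d2; rewrite ball2 in mxy; rewrite ball1 in yx.
have myx : cnbhd_meet y x by rewrite cnbhd_meetC.
split=> [[_ [k [dk [Hx Hy]]]] | [Hx Hy]].
  rewrite (dist_eq_uniq dk d2) in Hx Hy; split.
  - by move=> u xu; move: (Hx u xu); rewrite (dist_eq3_next mxy xu) negbK.
  - by move=> v yv; move: (Hy v yv); rewrite (dist_eq3_next myx yv) negbK.
split; first by apply: contraNneq yx => ->; apply: cnbhd_refl.
exists 2; split=> //; split.
- by move=> u xu; rewrite (dist_eq3_next mxy xu) Hx.
- by move=> v yv; rewrite (dist_eq3_next myx yv) Hy.
Qed.

Lemma mmd2_sym x y : mmd2 x y -> mmd2 y x.
Proof. by case=> yx Hx Hy; split; rewrite // -in_cnbhdC. Qed.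

Lemma mmd2_dist2 x y : mmd2 x y -> dist_eq e x y 2.
Proof. by case=> yx Hx _; rewrite dist_eq2 yx andbT Hx ?cnbhd_refl. Qed.

Lemma mmd2_far_notin x y z : mmd2 x y -> ~~ cnbhd_meet x z -> z \notin cnbhd e y.
Proof. by case=> _ _ Hy; apply: contra => /Hy; rewrite cnbhd_meetC. Qed.

Lemma SR_edge1_cnbhd_sub u v : e u v ->
  (forall x, e u x -> ~~ dist_eq e x v 2) -> cnbhd e u \subset cnbhd e v.
Proof.
move=> uv Hu; apply/subsetP => w; rewrite in_cnbhd => /orP[/eqP->|uw].
  by rewrite in_cnbhdC in_cnbhd uv orbT.
move: (Hu w uw); rewrite dist_eq2 negb_and negbK in_cnbhdC => /orP[] //.
by rewrite (cnbhd_meetI (w := u)) // in_cnbhdC in_cnbhd ?uv ?uw orbT.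
Qed.

Section DiameterThree.
Hypothesis diam_le3 : forall x y, y \in ball e 3 x.

Lemma dist_eq3 x y : dist_eq e x y 3 = ~~ cnbhd_meet x y.
Proof. by rewrite dist_eqS ball2 diam_le3. Qed.

Lemma dist_eq_gt3 x y k : 3 < k -> dist_eq e x y k = false.
Proof.
case: k => // k lt3k; apply/negbTE; rewrite dist_eqS negb_and negbK.
by rewrite (mem_ball_le (lt3k : 3 <= k) (diam_le3 x y)) orbT.
Qed.

Lemma SR_edge_diam3 x y : SR_edge e x y <->
  (e x y /\ cnbhd e x = cnbhd e y) \/ mmd2 x y \/ ~~ cnbhd_meet x y.
Proof.
split=> [[xy [k [dk [Hx Hy]]]] | ].
  case: k dk Hx Hy => [|[|[|[|k]]]] dk Hx Hy.
  - by rewrite dist_eq0 eq_sym (negbTE xy) in dk.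
  - rewrite dist_eq1 in dk; left; split=> //.
    by apply/eqP; rewrite eqEsubset !SR_edge1_cnbhd_sub // e_sym.
  - rewrite dist_eq2 in dk; case/andP: dk => mxy yx; right; left; split=> //.
      by move=> u; rewrite in_cnbhd => /orP[/eqP-> //|/Hx]; rewrite dist_eq3 negbK.
    move=> v; rewrite in_cnbhd => /orP[/eqP->|/Hy]; first by rewrite cnbhd_meetC.
    by rewrite dist_eq3 negbK.
  - by rewrite dist_eq3 in dk; right; right.
  - by rewrite dist_eq_gt3 in dk.
case=> [[xy Nxy] | [[yx Hx Hy] | fxy]].
- split; first by apply: contraTneq xy => ->; rewrite e_irr.
  exists 1; rewrite dist_eq1; split=> //; split=> u eu; rewrite dist_eq2 negb_and negbK.
    by rewrite in_cnbhdC -Nxy in_cnbhd eu !orbT.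
  by rewrite in_cnbhdC Nxy in_cnbhd eu !orbT.
- split; first by apply: contraNneq yx => ->; apply: cnbhd_refl.
  exists 2; rewrite dist_eq2 yx Hx ?cnbhd_refl //; split=> //; split=> u eu.
    by rewrite dist_eq3 negbK Hx // in_cnbhd eu !orbT.
  by rewrite dist_eq3 negbK Hy // in_cnbhd eu !orbT.
- split; first by apply: contraNneq fxy => ->; apply: cnbhd_meet_refl.
  by exists 3; rewrite dist_eq3 fxy; split=> //; split=> u _; rewrite dist_eq_gt3.
Qed.

End DiameterThree.

Section ExactDiameterThree.
Hypothesis diam3 : diam_eq e 3.

Lemma boundary_diam3 u : boundary e u <-> exists v, ~~ cnbhd_meet u v.
Proof.
have diam_le3 := diam3.1; split=> [[k [[dk [x [y dxy]]] [v duv]]] | [v fuv]].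
  suff k3 : k = 3 by exists v; rewrite -dist_eq3 // -k3.
  have [x' [y' d3]] := diam3.2; rewrite dist_eq3 // in d3.
  have [lt3k|] := ltnP 3 k; first by rewrite dist_eq_gt3 in dxy.
  rewrite leq_eqVlt ltnS => /orP[/eqP //|k2].
  by move: (mem_ball_le k2 (dk x' y')); rewrite ball2 (negbTE d3).
by exists 3; split=> //; exists v; rewrite dist_eq3.
Qed.

Lemma mmd2_interior x y : ~ boundary e x -> ~ boundary e y ->
  mmd2 x y <-> dist_eq e x y 2.
Proof.
move=> /boundary_diam3 nbx /boundary_diam3 nby; split; first exact: mmd2_dist2.
rewrite dist_eq2 => /andP[_ yx]; split=> // [u _ | v _]; apply: contraT => f.
  by case: nby; exists u; rewrite cnbhd_meetC.
by case: nbx; exists v; rewrite cnbhd_meetC.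
Qed.

End ExactDiameterThree.

End ClosedNeighbourhoods.

Section Relabelling.
Variables (T T' : finType) (e : rel T) (e' : rel T') (f : T -> T').
Hypotheses (f_bij : bijective f) (f_edge : forall x y, e' (f x) (f y) = e x y).

Lemma cnbhd_relabel x y : (f y \in cnbhd e' (f x)) = (y \in cnbhd e x).
Proof. by rewrite !inE f_edge (bij_eq f_bij). Qed.

Lemma cnbhd_meet_relabel x y : cnbhd_meet e' (f x) (f y) = cnbhd_meet e x y.
Proof.
have [g fK gK] := f_bij.
apply/cnbhd_meetP/cnbhd_meetP => -[w]; last by exists (f w); rewrite cnbhd_relabel.
by rewrite -[w]gK !cnbhd_relabel; exists (g w).
Qed.

Lemma mmd2_relabel x y : mmd2 e x y -> mmd2 e' (f x) (f y).
Proof.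
have [g fK gK] := f_bij.
case=> yx Hx Hy; split=> [|u|v]; first by rewrite cnbhd_relabel.
  by rewrite -[u]gK cnbhd_relabel cnbhd_meet_relabel; apply: Hx.
by rewrite -[v]gK cnbhd_relabel cnbhd_meet_relabel; apply: Hy.
Qed.

End Relabelling.

Section ModularProduct.
Variables (T1 T2 : finType) (eG : rel T1) (eH : rel T2).
Hypotheses (sG : symmetric eG) (iG : irreflexive eG).
Hypotheses (sH : symmetric eH) (iH : irreflexive eH).
Local Notation P := (modprod eG eH).
Local Notation NG := (cnbhd eG).
Local Notation NH := (cnbhd eH).

Lemma modprod_irr : irreflexive P.
Proof. by move=> a; rewrite /modprod eqxx. Qed.

Lemma cnbhd_modprod a x : (x \in cnbhd P a) = ((x.1 \in NG a.1) == (x.2 \in NH a.2)).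
Proof.
case: a x => g h [x1 x2]; rewrite !in_cnbhd /modprod /= !xpair_eqE.
case: (eqVneq x1 g) => [->|x1g]; case: (eqVneq x2 h) => [->|x2h];
  rewrite ?iG ?iH ?eqxx //=; by case: (eG g x1); case: (eH h x2).
Qed.

Lemma modprod_sym : symmetric P.
Proof.
move=> a b; rewrite !(edge_cnbhd modprod_irr) !cnbhd_modprod eq_sym.
by rewrite (in_cnbhdC sG b.1) (in_cnbhdC sH b.2).
Qed.

Lemma far_modprod_cnbhd a b : ~~ cnbhd_meet P a b -> forall x1 x2,
  ~~ [&& (x1 \in NG a.1) == (x2 \in NH a.2) & (x1 \in NG b.1) == (x2 \in NH b.2)].
Proof.
move=> fab x1 x2; apply: contra fab => /andP[xa xb].
by apply: (cnbhd_meetI (w := (x1, x2))); rewrite cnbhd_modprod.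
Qed.

Lemma far_modprod_notin g h g' h' :
  ~~ cnbhd_meet P (g, h) (g', h') -> (g' \in NG g) != (h' \in NH h).
Proof. by move/far_modprod_cnbhd/(_ g' h'); rewrite /= !cnbhd_refl eqxx andbT. Qed.

Lemma far_modprod_fst g h g' h' : g' \in NG g -> ~~ cnbhd_meet P (g, h) (g', h') ->
  [/\ NG g = NG g', ~~ cnbhd_meet eH h h' & universal eG g \/ cnbhd_cover eH h h'].
Proof.
move=> gg' far; have nm := far_modprod_cnbhd far; rewrite /= in nm.
have hh' : h' \notin NH h by move: (far_modprod_notin far); rewrite gg'; case: (_ \in _).
have g'g : g \in NG g' by rewrite (in_cnbhdC sG).
have h'h : h \notin NH h' by rewrite (in_cnbhdC sH).
have Ngg' : NG g = NG g'.
  apply/setP => w; apply/idP/idP => wN; apply: contraT => wN'.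
  - by move: (nm w h); rewrite wN (negbTE wN') cnbhd_refl (negbTE h'h).
  - by move: (nm w h'); rewrite wN (negbTE wN') cnbhd_refl (negbTE hh').
split=> //.
  apply/cnbhd_meetP => -[w wh wh'].
  by move: (nm g w); rewrite cnbhd_refl g'g wh wh'.
have [ug|/not_universal[t tg]] := universalP eG g; [by left | right].
apply/setP => w; rewrite in_setU in_setT.
apply: contraT; rewrite negb_or => /andP[wh wh'].
by move: (nm t w); rewrite (negbTE tg) -Ngg' (negbTE tg) (negbTE wh) (negbTE wh').
Qed.

Lemma twins_far_modprod g h g' h' : NG g = NG g' -> ~~ cnbhd_meet eH h h' ->
  universal eG g \/ cnbhd_cover eH h h' -> ~~ cnbhd_meet P (g, h) (g', h').
Proof.
move=> Ngg' fhh' ug_cov; apply/cnbhd_meetP => -[[x1 x2]]; rewrite !cnbhd_modprod /= -Ngg'.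
have [xg|xg] := boolP (x1 \in NG g) => /eqP xh /eqP xh'.
  by move/negP: fhh'; apply; apply: (cnbhd_meetI (w := x2)); rewrite -?xh -?xh'.
case: ug_cov => [ug|cov]; first by rewrite (universal_cnbhd x1 ug) in xg.
by move: (cnbhd_cover_mem cov x2); rewrite -xh -xh'.
Qed.

End ModularProduct.

Section Swap.
Variables (T1 T2 : finType) (eG : rel T1) (eH : rel T2).
Hypotheses (sG : symmetric eG) (iG : irreflexive eG).
Hypotheses (sH : symmetric eH) (iH : irreflexive eH).
Local Notation P := (modprod eG eH).
Local Notation Q := (modprod eH eG).

Lemma modprod_swap a b : Q (swap_pair a) (swap_pair b) = P a b.
Proof.
rewrite !(edge_cnbhd (modprod_irr _ _)) !cnbhd_modprod //=.
by rewrite (inj_eq (can_inj swap_pairK)) [_ == (_ \in _)]eq_sym.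
Qed.

Lemma cnbhd_meet_swap g h g' h' :
  cnbhd_meet Q (h, g) (h', g') = cnbhd_meet P (g, h) (g', h').
Proof.
exact: (cnbhd_meet_relabel (Bijective swap_pairK swap_pairK) modprod_swap
  (g, h) (g', h')).
Qed.

Lemma mmd2_swap g h g' h' : mmd2 P (g, h) (g', h') -> mmd2 Q (h, g) (h', g').
Proof.
exact: (mmd2_relabel (Bijective swap_pairK swap_pairK) modprod_swap
  (x := (g, h)) (y := (g', h'))).
Qed.

Lemma far_modprod_snd g h g' h' :
  h' \in cnbhd eH h -> ~~ cnbhd_meet P (g, h) (g', h') ->
  [/\ cnbhd eH h = cnbhd eH h', ~~ cnbhd_meet eG g g'
    & universal eH h \/ cnbhd_cover eG g g'].
Proof. by move=> hh'; rewrite -cnbhd_meet_swap; apply: far_modprod_fst. Qed.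

Lemma cond_iv_swap g h g' h' :
  cond_iv eH eG (h, g) (h', g') <-> cond_iv eG eH (g, h) (g', h').
Proof. exact: or_comm. Qed.

Lemma cond_v_swap g h g' h' :
  cond_v eH eG (h, g) (h', g') <-> cond_v eG eH (g, h) (g', h').
Proof. exact: or_comm. Qed.

End Swap.

Section MaximallyDistantPairs.
Variables (T1 T2 : finType) (eG : rel T1) (eH : rel T2).
Hypotheses (sG : symmetric eG) (iG : irreflexive eG).
Hypotheses (sH : symmetric eH) (iH : irreflexive eH).
Local Notation P := (modprod eG eH).
Local Notation NG := (cnbhd eG).
Local Notation NH := (cnbhd eH).

Lemma universal_fst_meet g h g' h' :
  universal eG g -> universal eG g' -> cnbhd_meet eH h h' ->
  (forall u, eH h u -> cnbhd_meet eH u h') ->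
  {in cnbhd P (g, h), forall x, cnbhd_meet P x (g', h')}.
Proof.
move=> ug ug' mhh' Hh [x1 x2]; rewrite (cnbhd_modprod iG iH) /= (universal_cnbhd _ ug).
move=> /eqP/esym x2h; apply: contraT => far.
have g'x1 : g' \in NG x1 by rewrite (in_cnbhdC sG) (universal_cnbhd _ ug').
have [_ fx2h' _] := far_modprod_fst sG iG sH iH g'x1 far.
move: x2h; rewrite in_cnbhd => /orP[/eqP x2h | /Hh mx2h'].
  by rewrite x2h mhh' in fx2h'.
by rewrite mx2h' in fx2h'.
Qed.

Variables (g g' : T1) (h h' : T2).

Section BoundaryFst.
Hypothesis mmd : mmd2 P (g, h) (g', h').

Lemma mmd2_universal_fst z : ~~ cnbhd_meet eH h z ->
  universal eG g \/ cnbhd_cover eH h z -> universal eG g.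
Proof.
move=> fhz ug_cov.
have := mmd2_far_notin mmd (twins_far_modprod iG iH (erefl _) fhz ug_cov).
have [nb _ _] := mmd; rewrite !(cnbhd_modprod iG iH) /= (in_cnbhdC sG g') in nb *.
have [gg'|gg'] := boolP (g' \in NG g).
  case: ug_cov => // cov.
  have hh' : h' \notin NH h by move: nb; rewrite gg'; case: (_ \in _).
  have zh' : z \in NH h'.
    by move: (cnbhd_cover_mem cov h'); rewrite (negbTE hh') in_cnbhdC.
  by rewrite zh'.
have hh' : h' \in NH h by move: nb; rewrite (negbTE gg'); case: (_ \in _).
rewrite eq_sym eqbF_neg negbK => zh'.
by case/negP: fhz; apply: (cnbhd_meetI hh'); rewrite in_cnbhdC.
Qed.

Section UniversalFst.
Hypothesis ug : universal eG g.

Lemma mmd2_universal_meet w : w \in NH h' -> cnbhd_meet eH h w.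
Proof.
move=> wh'; apply: contraT => fhw.
have := mmd2_far_notin mmd (twins_far_modprod iG iH (erefl _) fhw (or_introl ug)).
by rewrite (cnbhd_modprod iG iH) /= (in_cnbhdC sG) (universal_cnbhd _ ug) wh'.
Qed.

Lemma mmd2_universal_dist2 : dist_eq eH h h' 2.
Proof.
have [nb _ _] := mmd; rewrite (cnbhd_modprod iG iH) /= (universal_cnbhd _ ug) in nb.
by rewrite dist_eq2 // mmd2_universal_meet ?cnbhd_refl //; case: (_ \in _) nb.
Qed.

Lemma mmd2_universal_twins : NG g' = NG g -> cond_iv eG eH (g, h) (g', h').
Proof.
move=> Ng'g; left; split=> //; split; first by rewrite /universal Ng'g.
split; first exact: mmd2_universal_dist2.
apply/(SR_edge_dist2 sH mmd2_universal_dist2); split=> [u hu | u h'u].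
  have [_ Hx _] := mmd; apply: contraTT (Hx (g, u) _) => [fuh'|].
    by apply: (twins_far_modprod iG iH); [rewrite Ng'g | | left].
  by rewrite (cnbhd_modprod iG iH) /= cnbhd_refl in_cnbhd hu orbT.
by rewrite cnbhd_meetC mmd2_universal_meet // in_cnbhd h'u orbT.
Qed.

Lemma mmd2_universal_not_twins : NG g' <> NG g -> cond_v eG eH (g, h) (g', h').
Proof.
move=> Ng'g; left; split=> //; split; first by move=> ug'; apply: Ng'g; rewrite ug ug'.
split; first exact: mmd2_universal_dist2.
split=> [h'' h''h' | [h0 [_ [cap cup]]]].
  by rewrite /dist_le ball2 // mmd2_universal_meet.
have h'h : h \notin NH h'.
  by move: mmd2_universal_dist2; rewrite dist_eq2 // in_cnbhdC // => /andP[].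
have h0h : h0 \in NH h.
  by move: (cnbhd_cover_mem cup h); rewrite (negbTE h'h) in_cnbhdC.
have [_ Hx _] := mmd; have := Hx (g', h0).
rewrite (cnbhd_modprod iG iH) /= h0h (universal_cnbhd _ ug) => /(_ isT).
apply/negP; apply: (twins_far_modprod iG iH) => //.
  by rewrite /cnbhd_meet setIC cap eqxx.
by right; rewrite /cnbhd_cover setUC.
Qed.

End UniversalFst.

Lemma mmd2_far_fst_cond z : ~~ cnbhd_meet eH h z ->
  universal eG g \/ cnbhd_cover eH h z ->
  cond_iv eG eH (g, h) (g', h') \/ cond_v eG eH (g, h) (g', h').
Proof.
move=> fhz ug_cov; have ug := mmd2_universal_fst fhz ug_cov.
have [Ng'g | /eqP Ng'g] := eqVneq (NG g') (NG g).
  by left; apply: mmd2_universal_twins.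
by right; apply: mmd2_universal_not_twins.
Qed.

End BoundaryFst.

Lemma cond_iv_fst_mmd2 : universal eG g -> universal eG g' -> dist_eq eH h h' 2 ->
  SR_edge eH h h' -> mmd2 P (g, h) (g', h').
Proof.
move=> ug ug' d2 /(SR_edge_dist2 sH d2)[Hh Hh'].
move: d2; rewrite dist_eq2 // => /andP[mhh' hh'].
split; first by rewrite (cnbhd_modprod iG iH) /= (universal_cnbhd _ ug) (negbTE hh').
  exact: universal_fst_meet.
by apply: universal_fst_meet; rewrite // cnbhd_meetC.
Qed.

Lemma cond_v_fst_mmd2 : universal eG g -> ~ universal eG g' -> dist_eq eH h h' 2 ->
  (forall h'', h'' \in NH h' -> dist_le eH h h'' 2) ->
  ~ (exists h0, gamma_pair eH h' h0) -> mmd2 P (g, h) (g', h').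
Proof.
move=> ug nug'; rewrite dist_eq2 // => /andP[mhh' hh'] Hd ngam.
have gN x1 : g \in NG x1 by rewrite (in_cnbhdC sG) (universal_cnbhd _ ug).
split=> [|[x1 x2]|[y1 y2]].
- by rewrite (cnbhd_modprod iG iH) /= (universal_cnbhd _ ug) (negbTE hh').
-
rewrite (cnbhd_modprod iG iH) /= (universal_cnbhd _ ug) => /eqP/esym x2h.
  apply: contraT => far; move: (far_modprod_notin iG iH far).
  have [g'x1|g'x1] := boolP (g' \in NG x1) => /= h'x2.
    have [Nx1 fx2h' [ux1|cov]] := far_modprod_fst sG iG sH iH g'x1 far.
      by case: nug'; rewrite /universal -Nx1.
    case: ngam; exists x2; split.
      by apply: contraNneq fx2h' => ->; apply: cnbhd_meet_refl.
    by split; [apply/eqP; rewrite setIC; apply/negbNE | rewrite setUC].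
  have {}h'x2 : h' \in NH x2 by case: (_ \in _) h'x2.
  have [Nx2 _ _] := far_modprod_snd sG iG sH iH h'x2 far.
  by move: x2h; rewrite (in_cnbhdC sH) Nx2 (in_cnbhdC sH) (negbTE hh').
- rewrite (cnbhd_modprod iG iH) /= => hy; apply: contraT => far.
  have [Ny1 fy2h _] := far_modprod_fst sG iG sH iH (gN y1) far.
  move: hy; rewrite (in_cnbhdC sG) Ny1 (universal_cnbhd _ ug) => /eqP/esym/Hd.
  by rewrite /dist_le ball2 // cnbhd_meetC (negbTE fy2h).
Qed.

End MaximallyDistantPairs.

Section StrongResolvingEdges.
Variables (T1 T2 : finType) (eG : rel T1) (eH : rel T2).
Hypotheses (sG : symmetric eG) (iG : irreflexive eG).
Hypotheses (sH : symmetric eH) (iH : irreflexive eH).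
Local Notation P := (modprod eG eH).

Lemma cond_mmd2 a b : cond_iv eG eH a b \/ cond_v eG eH a b -> mmd2 P a b.
Proof.
case: a b => [g h] [g' h'].
have swap_back : mmd2 (modprod eH eG) (h, g) (h', g') -> mmd2 P (g, h) (g', h').
  exact: mmd2_swap.
case=> [[[ug [ug' [d2 sr]]] | [uh [uh' [d2 sr]]]] |
        [[ug [nug' [d2 [Hd ng]]]] | [uh [nuh' [d2 [Hd ng]]]]]].
- exact: cond_iv_fst_mmd2.
- by apply: swap_back; apply: cond_iv_fst_mmd2.
- exact: cond_v_fst_mmd2.
- by apply: swap_back; apply: cond_v_fst_mmd2.
Qed.

Lemma boundary_mmd2_cond a b z : mmd2 P a b -> ~~ cnbhd_meet P a z ->
  cond_iv eG eH a b \/ cond_v eG eH a b.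
Proof.
case: a b z => [g h] [g' h'] [z1 z2] mmd far.
have [gz|gz] := boolP (z1 \in cnbhd eG g).
  have [_ fhz ug_cov] := far_modprod_fst sG iG sH iH gz far.
  exact: (mmd2_far_fst_cond sG iG sH iH mmd fhz ug_cov).
have hz : z2 \in cnbhd eH h.
  by move: (far_modprod_notin iG iH far); rewrite (negbTE gz); case: (_ \in _).
have [_ fgz uh_cov] := far_modprod_snd sG iG sH iH hz far.
case: (mmd2_far_fst_cond sH iH sG iG (mmd2_swap iG iH mmd) fgz uh_cov).
  by move/cond_iv_swap; left.
by move/cond_v_swap; right.
Qed.

Lemma mmd2_modprod_diam3 a b : diam_eq P 3 ->
  mmd2 P a b <->
  (dist_eq P a b 2 /\ ~ boundary P a /\ ~ boundary P b) \/
  (cond_iv eG eH a b \/ cond_iv eG eH b a) \/ (cond_v eG eH a b \/ cond_v eG eH b a).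
Proof.
move=> diam3; have sP := modprod_sym sG iG sH iH.
have interior c : ~~ [exists z, ~~ cnbhd_meet P c z] -> ~ boundary P c.
  by move/existsPn=> nc /(boundary_diam3 sP diam3)[z /negP[]]; apply/negbNE/nc.
split=> [mmd | [[d2 [na nb]] | [[iv|iv] | [v|v]]]].
- have [/existsP[z fz] | na] := boolP [exists z, ~~ cnbhd_meet P a z].
    by right; case: (boundary_mmd2_cond mmd fz); [left; left | right; left].
  have [/existsP[z fz] | nb] := boolP [exists z, ~~ cnbhd_meet P b z].
    right; case: (boundary_mmd2_cond (mmd2_sym sP mmd) fz).
      by left; right.
    by right; right.
  by left; split; [apply: mmd2_dist2 | split; apply: interior].
- exact/(mmd2_interior sP diam3 na nb).
- by apply: cond_mmd2; left.
- by apply: (mmd2_sym sP); apply: cond_mmd2; left.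
- by apply: cond_mmd2; right.
- by apply: (mmd2_sym sP); apply: cond_mmd2; right.
Qed.

End StrongResolvingEdges.

Theorem mainTheorem6 (T1 T2 : finType) (eG : rel T1) (eH : rel T2) :
  symmetric eG -> irreflexive eG ->
  symmetric eH -> irreflexive eH ->
  ~ complete eG -> ~ complete eH ->
  ~ (two_cliques eG /\ two_cliques eH) ->
  diam_eq (modprod eG eH) 3 ->
  forall a b : T1 * T2,
    SR_edge (modprod eG eH) a b <->
    (* (i) *) (a != b /\ cnbhd (modprod eG eH) a = cnbhd (modprod eG eH) b) \/
    (* (ii) *) (dist_eq (modprod eG eH) a b 2 /\
          ~ boundary (modprod eG eH) a /\ ~ boundary (modprod eG eH) b) \/
    (* (iii) *) dist_eq (modprod eG eH) a b 3 \/
    (* (iv) *) (cond_iv eG eH a b \/ cond_iv eG eH b a) \/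
    (* (v) *) (cond_v eG eH a b \/ cond_v eG eH b a).
Proof.
move=> sG iG sH iH _ _ _ diam3 a b.
have sP := modprod_sym sG iG sH iH; have iP := modprod_irr eG eH.
have adjacent_twins :
    modprod eG eH a b /\ cnbhd (modprod eG eH) a = cnbhd (modprod eG eH) b <->
    a != b /\ cnbhd (modprod eG eH) a = cnbhd (modprod eG eH) b.
  by split=> -[ab Nab]; split=> //; move: ab; rewrite (twins_edge iP Nab).
have := SR_edge_diam3 sP iP diam3.1 a b.
have := mmd2_modprod_diam3 sG iG sH iH a b diam3.
rewrite (dist_eq3 sP diam3.1).
tauto.
Qed.
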